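(* Let $d_L\geq2$ and let $\lambda=(\lambda_1,\dots,\lambda_{d_L})$ be a Young diagram, i.e. integers with $\lambda_1\geq\lambda_2\geq\cdots\geq\lambda_{d_L}=0$, labeling an irreducible representation of $U(d_L)$ of dimension $$D_\lambda=\prod_{1\leq i<j\leq d_L}\frac{\lambda_i-\lambda_j+j-i}{j-i}.$$ Then $$\binom{d_L-1+\lambda_1}{d_L-1}\leq D_\lambda,$$ the left side being the dimension of the symmetric representation with Young diagram $(\lambda_1,0,\dots,0)$. *)

From mathcomp Require Import all_boot all_order all_algebra.
Set Implicit Arguments. Unset Strict Implicit. Unset Printing Implicit Defensive.
Import Order.TTheory GRing.Theory Num.Theory.
Local Open Scope ring_scope.

(* Young diagram lam indexed 1..d (lam : nat -> nat, only lam 1 .. lam d matter). *)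
Definition weyl_dim (d : nat) (lam : nat -> nat) : rat :=
  \prod_(1 <= i < d.+1) \prod_(i.+1 <= j < d.+1)
    (((lam i)%:R - (lam j)%:R + j%:R - i%:R) / (j%:R - i%:R)).

Definition young_diagram (d : nat) (lam : nat -> nat) : Prop :=
  (forall i j : nat, (1 <= i)%N -> (i <= j)%N -> (j <= d)%N -> (lam j <= lam i)%N)
  /\ lam d = 0%N.

From mathcomp Require Import all_boot all_order all_algebra.
From mathcomp Require Import zify lra.
Set Implicit Arguments. Unset Strict Implicit. Unset Printing Implicit Defensive.
Import Order.TTheory GRing.Theory Num.Theory.
Local Open Scope ring_scope.

(* Group the factors of the Weyl product along the diagonals j - i = k.  On the
   k-th diagonal the factor at (i, i + k) is 1 + (lam_i - lam_(i+k)) / k with a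
   nonnegative increment, so the diagonal product is at least 1 plus the sum of
   the increments; that sum telescopes to at least (lam_1 - lam_d) / k = lam_1 / k.
   Hence the k-th diagonal contributes at least (lam_1 + k) / k, and the product
   of these bounds over k = 1 .. d-1 is the binomial coefficient. *)

Lemma big_triangle_diagonals (R : Type) (idx : R) (op : Monoid.com_law idx)
    (d : nat) (F : nat -> nat -> R) :
  \big[op/idx]_(1 <= i < d.+1) \big[op/idx]_(i.+1 <= j < d.+1) F i j =
  \big[op/idx]_(1 <= k < d) \big[op/idx]_(1 <= i < (d - k).+1) F i (i + k).
Proof.
transitivity (\big[op/idx]_(1 <= i < d.+1)
                \big[op/idx]_(1 <= k < d.+1 | (i + k <= d)%N) F i (i + k)).
  apply: eq_bigr => i _.
  rewrite -[in LHS](add1n i) big_addn (big_nat_widen _ _ d.+1); last by lia.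
  by apply: eq_big => [k|k _]; [apply/idP/idP; lia | rewrite addnC].
rewrite (exchange_big_dep_nat (fun k => k < d)%N); last by move=> i k; lia.
rewrite (big_nat_widen _ d d.+1) //.
apply: eq_big => [k|k]; first by apply/idP/idP; lia.
move=> lt_kd.
rewrite (big_nat_widen _ (d - k).+1 d.+1); last by lia.
by apply: eq_bigl => i; apply/idP/idP; lia.
Qed.

Lemma binomial_prod (R : numFieldType) (a m : nat) :
  ('C(m + a, m))%:R = \prod_(1 <= k < m.+1) ((a + k)%:R / k%:R) :> R.
Proof.
elim: m => [|m IH]; first by rewrite bin0 big_geq.
rewrite big_nat_recr //= -IH addSn.
have /= binS := mul_bin_diag (m + a).+1 m.
apply: (mulIf (x := m.+1%:R)); first by rewrite pnatr_eq0.
by rewrite -mulrA divfK ?pnatr_eq0 // -!natrM mulnC -binS mulnC addnS addnC.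
Qed.

Lemma one_add_sum_le_prod (R : realDomainType) (I : eqType) (r : seq I) (y : I -> R) :
  {in r, forall i, 0 <= y i} ->
  1 + \sum_(i <- r) y i <= \prod_(i <- r) (1 + y i).
Proof.
elim: r => [|x r IH] y_ge0; first by rewrite !big_nil addr0.
rewrite !big_cons.
have yx_ge0 : 0 <= y x by apply: y_ge0; rewrite inE eqxx.
have yr_ge0 : {in r, forall i, 0 <= y i}.
  by move=> i ri; apply: y_ge0; rewrite inE ri orbT.
have sum_ge0 : 0 <= \sum_(i <- r) y i.
  by rewrite big_seq; apply: sumr_ge0 => i /yr_ge0.
apply: le_trans _ (ler_wpM2l _ (IH yr_ge0)); [nra | lra].
Qed.

Lemma telescope_shift_ge (R : realDomainType) (a : nat -> R) (k n : nat) :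
  (forall i j, (1 <= i)%N -> (i <= j)%N -> (j <= n + k)%N -> a j <= a i) ->
  (0 < k)%N -> (0 < n)%N ->
  a 1%N - a (n + k)%N <= \sum_(1 <= i < n.+1) (a i - a (i + k)%N).
Proof.
move=> a_antitone k_gt0; elim: n a_antitone => [//|[|n] IH] a_antitone _.
  by rewrite big_nat1.
rewrite big_nat_recr //=.
have IHn := IH (fun i j hi hij hj => a_antitone i j hi hij ltac:(lia)) isT.
have step : a (n.+1 + k)%N <= a n.+2 by apply: a_antitone; lia.
lra.
Qed.

Definition weyl_factor (R : numFieldType) (lam : nat -> nat) (i j : nat) : R :=
  ((lam i)%:R - (lam j)%:R + j%:R - i%:R) / (j%:R - i%:R).

Lemma weyl_factor_diag (R : numFieldType) (lam : nat -> nat) (i k : nat) :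
  (0 < k)%N ->
  weyl_factor R lam i (i + k) = 1 + ((lam i)%:R - (lam (i + k))%:R) / k%:R.
Proof.
move=> k_gt0; have k_neq0 : k%:R != 0 :> R by rewrite pnatr_eq0 -lt0n.
by rewrite /weyl_factor natrD addrA addrAC addrK (addrC i%:R) addrK mulrDl divff // addrC.
Qed.

Lemma weyl_diagonal_ge (R : realFieldType) (d k : nat) (lam : nat -> nat) :
  young_diagram d lam -> (0 < k < d)%N ->
  (lam 1%N + k)%:R / k%:R <= \prod_(1 <= i < (d - k).+1) weyl_factor R lam i (i + k).
Proof.
case=> lam_antitone lam_d /andP[k_gt0 lt_kd].
have k_neq0 : k%:R != 0 :> R by rewrite pnatr_eq0 -lt0n.
set y := fun i => ((lam i)%:R - (lam (i + k))%:R) / k%:R : R.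
rewrite (eq_bigr (fun i => 1 + y i)) => [|i _]; last exact: weyl_factor_diag.
have y_ge0 : {in index_iota 1 (d - k).+1, forall i, 0 <= y i}.
  move=> i; rewrite mem_index_iota => /andP[i_ge1 i_le].
  by rewrite divr_ge0 // subr_ge0 ler_nat; apply: lam_antitone; lia.
apply: le_trans _ (one_add_sum_le_prod y_ge0).
rewrite -mulr_suml natrD mulrDl divff // addrC lerD2l ler_pM2r ?invr_gt0 ?ltr0n //.
have lam_antitoneR (i j : nat) : (1 <= i)%N -> (i <= j)%N -> (j <= d - k + k)%N ->
    (lam j)%:R <= (lam i)%:R :> R.
  by move=> *; rewrite ler_nat; apply: lam_antitone; lia.
have := telescope_shift_ge lam_antitoneR k_gt0.
by rewrite subn_gt0 lt_kd subnK ?lam_d ?subr0 ?(ltnW lt_kd) //; apply.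
Qed.

Theorem lemma7 (d : nat) (lam : nat -> nat) (hd : (2 <= d)%N)
  (hlam : young_diagram d lam) :
  ('C(d.-1 + lam 1%N, d.-1))%:R <= weyl_dim d lam.
Proof.
have -> : weyl_dim d lam =
    \prod_(1 <= i < d.+1) \prod_(i.+1 <= j < d.+1) weyl_factor rat lam i j by [].
rewrite big_triangle_diagonals binomial_prod prednK; last by lia.
rewrite big_seq_cond [leRHS]big_seq_cond.
apply: ler_prod => k; rewrite andbT mem_index_iota => k_range.
by rewrite divr_ge0 //= weyl_diagonal_ge.
Qed.
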